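(* The Banach space $c$ of convergent real sequences (with the sup norm) can be U-embedded into $C[0,1]$.
   Context: $C[0,1]$ carries the sup norm. A linear isometry $T\colon X\to Y$ is a U-embedding if every $x^*\in X^*$ has a unique $y^*\in Y^*$ with $T^*(y^* )=x^*$ and $\|y^*\|=\|x^*\|$; ''$X$ can be U-embedded into $Y$'' means such a $T$ exists. *)

From HB Require Import structures.
From mathcomp Require Import all_boot all_order all_algebra.
From mathcomp Require Import all_classical all_reals all_analysis.
From mathcomp Require Import Rstruct Rstruct_topology.
Set Implicit Arguments. Unset Strict Implicit. Unset Printing Implicit Defensive.
Import Order.TTheory GRing.Theory Num.Theory.
Import numFieldNormedType.Exports.
Local Open Scope classical_set_scope.
Local Open Scope ring_scope.

Notation RR := Rdefinitions.R.

Definition conv_seq (u : nat -> RR) : Prop := cvgn u.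
Definition c_norm (u : nat -> RR) : RR := sup (range (fun n => `|u n|)).

(* The space C[0,1]: real functions continuous on [0,1], represented by
   functions RR -> RR (only their values on [0,1] matter), with the sup norm on [0,1]. *)
Definition I01 : set RR := [set x | 0 <= x <= 1].
Definition C01 (f : RR -> RR) : Prop := {within I01, continuous f}.
Definition C_norm (f : RR -> RR) : RR := sup [set `|f x| | x in I01].

Definition c_dual (phi : (nat -> RR) -> RR) : Prop :=
  (forall (a : RR) u v, conv_seq u -> conv_seq v ->
      phi (fun n => a * u n + v n) = a * phi u + phi v) /\
  exists M : RR, forall u, conv_seq u -> `|phi u| <= M * c_norm u.

(* Bounded (= continuous) linear functionals on C[0,1].  Boundedness forces
   phi f = phi g whenever f = g on [0,1], so these are exactly the elements of the dual of C[0,1]. *)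
Definition C_dual (psi : (RR -> RR) -> RR) : Prop :=
  (forall (a : RR) f g, C01 f -> C01 g ->
      psi (fun x => a * f x + g x) = a * psi f + psi g) /\
  exists M : RR, forall f, C01 f -> `|psi f| <= M * C_norm f.

Definition c_dual_norm (phi : (nat -> RR) -> RR) : RR :=
  sup [set `|phi u| | u in [set u | conv_seq u /\ c_norm u <= 1]].
Definition C_dual_norm (psi : (RR -> RR) -> RR) : RR :=
  sup [set `|psi f| | f in [set f | C01 f /\ C_norm f <= 1]].

Definition lin_isometry_c_C (T : (nat -> RR) -> (RR -> RR)) : Prop :=
  (forall u, conv_seq u -> C01 (T u)) /\
  (forall (a : RR) u v, conv_seq u -> conv_seq v -> forall x, I01 x ->
      T (fun n => a * u n + v n) x = a * T u x + T v x) /\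
  (forall u, conv_seq u -> C_norm (T u) = c_norm u).

Definition U_embedding_c_C (T : (nat -> RR) -> (RR -> RR)) : Prop :=
  lin_isometry_c_C T /\
  forall phi, c_dual phi ->
    exists psi,
      (C_dual psi /\ (forall u, conv_seq u -> psi (T u) = phi u) /\
       C_dual_norm psi = c_dual_norm phi) /\
      (forall psi', C_dual psi' -> (forall u, conv_seq u -> psi' (T u) = phi u) ->
         C_dual_norm psi' = c_dual_norm phi ->
         forall f, C01 f -> psi' f = psi f).

From HB Require Import structures.
From mathcomp Require Import all_boot all_order all_algebra.
From mathcomp Require Import all_classical all_reals all_analysis.
From mathcomp Require Import Rstruct Rstruct_topology.
From mathcomp Require Import lra ring.
Set Implicit Arguments. Unset Strict Implicit. Unset Printing Implicit Defensive.
Import Order.TTheory GRing.Theory Num.Theory.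
Import numFieldNormedType.Exports.
Local Open Scope classical_set_scope.
Local Open Scope ring_scope.

(* Let node n = 1/(n+1).  A convergent sequence u is sent to the continuous function
   [embed u] equal to u_n at node n and to lim u at 0, which between consecutive nodes
   mixes the nearest value of u with lim u through the weights cos^2 (pi/x) and
   sin^2 (pi/x), so that |embed u x| <= rho x * ||u|| with rho x = 1 - x sin^2 (pi/x).
   Sampling at the nodes is a left inverse of norm one, hence phi o sample is a
   norm-preserving extension of phi.  For uniqueness, note that rho < 1 away from 0 and
   the nodes.  If |g| + rho <= 1, then sg (psi g) g + embed u lies in the unit ball
   whenever u does, so ||psi|| >= ||phi|| + |psi g| and a norm-preserving psi kills g.
   Truncating near its zeros and using compactness, every g vanishing at 0 and at the
   nodes is uniformly close to a multiple of such a function; apply this to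
   f - embed (sample f). *)

Section RealFacts.
Variable R : realType.
Implicit Types (x y : R) (n : nat).

Lemma normr_sinDnpi x n : `|sin (x + pi * n%:R)| = `|sin x|.
Proof.
elim: n => [|n IH]; first by rewrite mulr0 addr0.
by rewrite mulrSr mulrDr mulr1 addrA sinDpi normrN.
Qed.

Lemma normr_cosDnpi x n : `|cos (x + pi * n%:R)| = `|cos x|.
Proof.
elim: n => [|n IH]; first by rewrite mulr0 addr0.
by rewrite mulrSr mulrDr mulr1 addrA cosDpi normrN.
Qed.

Lemma sin_npi n : sin (pi * n%:R : R) = 0.
Proof. by apply/normr0_eq0; rewrite -(add0r (pi * _)) normr_sinDnpi sin0 normr0. Qed.

Lemma sqr_cos_npi n : cos (pi * n%:R : R) ^+ 2 = 1.
Proof.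
by rewrite -real_normK ?num_real // -(add0r (pi * _)) normr_cosDnpi cos0 normr1 expr1n.
Qed.

Lemma sin_pi_eq0 y : 0 < y -> sin (pi * y) = 0 -> exists n, y = n.+1%:R.
Proof.
move=> y_gt0 sin_eq0.
have /andP[le_my lt_ym] := truncn_itv (ltW y_gt0).
set m := Num.truncn y in le_my lt_ym.
have frac_eq0 : y - m%:R = 0.
  apply/eqP; apply: contraT => frac_neq0.
  have frac_gt0 : 0 < y - m%:R by rewrite lt_neqAle eq_sym frac_neq0 subr_ge0.
  have : 0 < sin (pi * (y - m%:R)).
    apply: sin_gt0_pi; rewrite mulr_gt0 ?pi_gt0 //=.
    by rewrite -[ltRHS]mulr1 ltr_pM2l ?pi_gt0 // ltrBlDl -mulrSr.
  move=> /gt_eqF /negbT.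
  by rewrite -normr_eq0 -(normr_sinDnpi _ m) mulrBr subrK sin_eq0 normr0 eqxx.
case: m frac_eq0 {le_my lt_ym} => [|n] /eqP.
  by rewrite subr0 => /eqP y0; rewrite y0 ltxx in y_gt0.
by rewrite subr_eq0 => /eqP ->; exists n.
Qed.

Lemma within_continuousP (A : set R) (f : R -> R) :
  {within A, continuous f} <-> forall x, A x -> forall e, 0 < e ->
    exists2 d, 0 < d & forall y, A y -> `|x - y| < d -> `|f x - f y| < e.
Proof.
rewrite continuous_subspace_in; split => [fc x Ax e e_gt0 | fc x].
- have := fc x (mem_set Ax); rewrite /continuous_at.
  change (nbhs (x : subspace A)) with (nbhs_subspace (x : subspace A)).
  rewrite -nbhs_subspace_in // => fx.
  have := (@cvgrPdist_lt _ R^o _ (within A (nbhs x)) _ (from_subspace A f) (f x)).1 fx e e_gt0.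
  move=> /(_ ltac:(typeclasses eauto)); rewrite near_withinE => /nbhs_ballP[d d_gt0 fd].
  by exists d => // y Ay xy; apply: fd.
- rewrite inE => Ax; rewrite /continuous_at.
  change (nbhs (x : subspace A)) with (nbhs_subspace (x : subspace A)).
  rewrite -nbhs_subspace_in //.
  apply/(@cvgrPdist_lt _ R^o _ (within A (nbhs x)) _ (from_subspace A f) (f x)) => e e_gt0.
  have [d d_gt0 fd] := fc x Ax e e_gt0.
  by rewrite near_withinE; apply/nbhs_ballP; exists d => // y /= xy Ay; apply: fd.
Qed.

Lemma continuous_atP (f : R -> R) x : {for x, continuous f} ->
  forall e, 0 < e -> exists2 d, 0 < d & forall y, `|x - y| < d -> `|f x - f y| < e.
Proof.
move=> /cvgrPdist_lt fc e /fc /nbhs_ballP[d d_gt0 fd].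
by exists d => // y xy; apply: fd.
Qed.

Lemma eq0_of_normr_le_mul (K y : R) : 0 <= K -> (forall e, 0 < e -> `|y| <= K * e) -> y = 0.
Proof.
move=> K_ge0 yK; apply/normr0_eq0/eqP; rewrite eq_le normr_ge0 andbT.
apply/ler_addgt0Pr => e e_gt0; rewrite add0r.
have K1_gt0 : 0 < K + 1 by rewrite ltr_pwDr.
apply: le_trans (yK _ (divr_gt0 e_gt0 K1_gt0)) _.
by rewrite mulrCA ger_pMr // ler_pdivrMr // mul1r lerDl.
Qed.

Definition clamp (e t : R) : R := Num.max (- e) (Num.min e t).

Lemma clamp_continuous e : continuous (clamp e).
Proof.
move=> t; apply: (@continuous_max _ _ (fun=> - e) (Num.min e)); first exact: cvg_cst.
by apply: (@continuous_min _ _ (fun=> e) id); [exact: cvg_cst | exact: cvg_id].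
Qed.

Lemma normr_clamp_le e t : 0 <= e -> `|clamp e t| <= e.
Proof.
move=> e_ge0; have Ne_le : - e <= e by rewrite lerNl (le_trans _ e_ge0) // oppr_le0.
by rewrite /clamp ler_norml le_max lexx ge_max Ne_le ge_min lexx.
Qed.

Lemma clamp_id e t : `|t| <= e -> clamp e t = t.
Proof. by rewrite ler_norml => /andP[Ne_le le_e]; rewrite /clamp min_r // max_r. Qed.

End RealFacts.

Lemma conv_seq_cst (a : RR) : conv_seq (fun=> a).
Proof. by apply/cvg_ex; exists a; exact: cvg_cst. Qed.

Lemma cvg_lin (a : RR) u v : conv_seq u -> conv_seq v ->
  (fun n => a * u n + v n) @ \oo --> a * limn u + limn v.
Proof.
move=> uc vc; apply: (@cvgD _ RR^o) vc.
exact: (@cvgM RR _ _ _ (fun=> a) u a (limn u) (cvg_cst _) uc).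
Qed.

Lemma conv_seq_lin (a : RR) u v : conv_seq u -> conv_seq v ->
  conv_seq (fun n => a * u n + v n).
Proof. by move=> uc vc; apply/cvg_ex; exists (a * limn u + limn v); exact: cvg_lin. Qed.

Lemma limn_lin (a : RR) u v : conv_seq u -> conv_seq v ->
  limn (fun n => a * u n + v n) = a * limn u + limn v.
Proof. by move=> uc vc; exact: (cvg_lim (@Rhausdorff RR) (cvg_lin uc vc)). Qed.

Lemma conv_seq_bounded u : conv_seq u -> exists B, forall n, `|u n| <= B.
Proof.
move=> /(@cvg_seq_bounded _ RR^o) /ex_bound[|B uB]; last by exists B => n; exact: uB.
exact: (@globally_properfilter _ _ 0%N).
Qed.

Lemma c_norm_ge u n : conv_seq u -> `|u n| <= c_norm u.
Proof.
move=> /conv_seq_bounded[B uB]; apply: ub_le_sup; last by exists n.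
by exists B => _ [m _ <-].
Qed.

Lemma c_norm_le u B : (forall n, `|u n| <= B) -> c_norm u <= B.
Proof. by move=> uB; apply: ge_sup => [|_ [m _ <-]] //; exists `|u 0%N|, 0%N. Qed.

Lemma c_norm_ge0 u : conv_seq u -> 0 <= c_norm u.
Proof. by move=> uc; exact: le_trans (normr_ge0 _) (c_norm_ge 0 uc). Qed.

Lemma normr_limn_le u : conv_seq u -> `|limn u| <= c_norm u.
Proof.
move=> uc; have normu : (fun n => `|u n|) @ \oo --> `|limn u|.
  exact: (@cvg_norm _ RR^o _ \oo _ u (limn u) uc).
rewrite -(cvg_lim (@Rhausdorff RR) normu); apply: limr_le; first by apply/cvg_ex; exists `|limn u|.
by apply: nearW => n; exact: c_norm_ge.
Qed.

Lemma c_dual_cst0 phi : c_dual phi -> phi (fun=> 0) = 0.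
Proof.
move=> [phi_lin _]; have := phi_lin 1 _ _ (@conv_seq_cst 0) (@conv_seq_cst 0).
have -> : (fun _ : nat => 1 * 0 + 0 : RR) = (fun=> 0) by apply: funext => n; rewrite mul1r addr0.
by rewrite mul1r -{1}[phi _]addr0 => /addrI.
Qed.

Lemma c_dualZ phi (a : RR) u : c_dual phi -> conv_seq u -> phi (fun n => a * u n) = a * phi u.
Proof.
move=> phic uc; have := phic.1 a _ _ uc (@conv_seq_cst 0).
rewrite c_dual_cst0 // addr0 => <-; congr phi; apply: funext => n; by rewrite addr0.
Qed.

Lemma c_dual_norm_le phi M : c_dual phi ->
  (forall u, conv_seq u -> c_norm u <= 1 -> phi u <= M) -> c_dual_norm phi <= M.
Proof.
move=> phic phiM; apply: ge_sup.
  exists `|phi (fun=> 0)|, (fun=> 0) => //; split; first exact: conv_seq_cst.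
  by apply: c_norm_le => n; rewrite normr0.
move=> _ [u [uc u_le1] <-]; rewrite ler_norml phiM // andbT lerNl -mulN1r -c_dualZ //.
apply: phiM.
  by have := conv_seq_lin (a := -1) uc (@conv_seq_cst 0); under eq_fun do rewrite addr0.
by apply: c_norm_le => n; rewrite mulN1r normrN; exact: le_trans (c_norm_ge n uc) u_le1.
Qed.

Lemma I01_0 : I01 0.
Proof. by rewrite /I01 /= lexx ler01. Qed.

Lemma I01_compact : compact I01.
Proof.
have -> : I01 = `[0, 1]%classic by apply/seteqP; split => x /=; rewrite in_itv.
exact: segment_compact.
Qed.

Lemma C01_cst (a : RR) : C01 (fun=> a).
Proof. by move=> x; exact: cvg_cst. Qed.

Lemma C01D f g : C01 f -> C01 g -> C01 (fun x => f x + g x).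
Proof. by move=> fc gc x; exact: (@cvgD _ RR^o) (fc x) (gc x). Qed.

Lemma C01B f g : C01 f -> C01 g -> C01 (fun x => f x - g x).
Proof. by move=> fc gc x; exact: (@cvgB _ RR^o) (fc x) (gc x). Qed.

Lemma C01Z (a : RR) f : C01 f -> C01 (fun x => a * f x).
Proof. by move=> fc x; exact: (@cvgM RR _ _ _ (fun=> a) f a (f x) (cvg_cst _) (fc x)). Qed.

Lemma C01_lin (a : RR) f g : C01 f -> C01 g -> C01 (fun x => a * f x + g x).
Proof. by move=> fc gc; apply: (C01D (f := fun x => a * f x)) gc; exact: C01Z. Qed.

Lemma C01_comp (h : RR -> RR) f : continuous h -> C01 f -> C01 (fun x => h (f x)).
Proof. by move=> hc fc; apply: within_continuous_comp => // y _; exact: hc. Qed.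

Lemma C01_bounded f : C01 f -> exists B, forall x, I01 x -> `|f x| <= B.
Proof.
move=> fc; have normfc : C01 (fun x => `|f x|).
  by apply: C01_comp fc; exact: (@norm_continuous _ RR^o).
have [c _ cmax] := compact_EVT_max (ex_intro _ 0 I01_0) I01_compact normfc.
by exists `|f c| => x Ix; apply: cmax; rewrite inE.
Qed.

Lemma C_norm_ge f x : C01 f -> I01 x -> `|f x| <= C_norm f.
Proof.
move=> /C01_bounded[B fB] Ix; apply: ub_le_sup; last by exists x.
by exists B => _ [y Iy <-]; exact: fB.
Qed.

Lemma C_norm_le f B : (forall x, I01 x -> `|f x| <= B) -> C_norm f <= B.
Proof.
move=> fB; apply: ge_sup => [|_ [y Iy <-]]; last exact: fB.
by exists `|f 0|, 0 => //; exact: I01_0.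
Qed.

Lemma C_norm_ge0 f : C01 f -> 0 <= C_norm f.
Proof. by move=> fc; exact: le_trans (normr_ge0 _) (C_norm_ge fc I01_0). Qed.

Lemma C_dual_bounded psi : C_dual psi ->
  exists2 K, 0 <= K & forall f, C01 f -> `|psi f| <= K * C_norm f.
Proof.
move=> [_ [M psiM]]; exists `|M| => // f fc.
by apply: le_trans (psiM f fc) _; rewrite ler_wpM2r ?C_norm_ge0 // ler_norm.
Qed.

Lemma C_dual_le_norm psi f : C_dual psi -> C01 f -> C_norm f <= 1 ->
  `|psi f| <= C_dual_norm psi.
Proof.
move=> /C_dual_bounded[K K_ge0 psiK] fc f_le1; apply: ub_le_sup; last by exists f.
exists K => _ [g [gc g_le1] <-]; apply: le_trans (psiK g gc) _.
by rewrite -[leRHS]mulr1 ler_wpM2l.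
Qed.

Lemma C_dual_cst0 psi : C_dual psi -> psi (fun=> 0) = 0.
Proof.
move=> [psi_lin _]; have := psi_lin 1 _ _ (@C01_cst 0) (@C01_cst 0).
have -> : (fun _ : RR => 1 * 0 + 0 : RR) = (fun=> 0) by apply: funext => x; rewrite mul1r addr0.
by rewrite mul1r -{1}[psi _]addr0 => /addrI.
Qed.

Lemma C_dualZ psi (a : RR) f : C_dual psi -> C01 f -> psi (fun x => a * f x) = a * psi f.
Proof.
move=> psic fc; have := psic.1 a _ _ fc (@C01_cst 0).
rewrite C_dual_cst0 // addr0 => <-; congr psi; apply: funext => x; by rewrite addr0.
Qed.

Definition node (n : nat) : RR := n.+1%:R^-1.

Definition nearest_node (x : RR) : nat := (Num.truncn (x^-1 + 2^-1)).-1.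

Lemma node_gt0 n : 0 < node n.
Proof. by rewrite invr_gt0 ltr0n. Qed.

Lemma I01_node n : I01 (node n).
Proof.
rewrite /I01 /= ltW ?node_gt0 //=.
by rewrite invr_le1 ?ler1n // unitfE pnatr_eq0.
Qed.

Lemma node_le m n : (m <= n)%N -> node n <= node m.
Proof. by move=> mn; rewrite lef_pV2 ?posrE ?ltr0n // ler_nat. Qed.

Lemma nearest_node_node n : nearest_node (node n) = n.
Proof.
rewrite /nearest_node invrK (@truncn_def _ _ n.+1) //.
by rewrite lerDl invr_ge0 ler0n /= [ltRHS]mulrSr ltrD2l invf_lt1 // ltr1n.
Qed.

Lemma nearest_node_ge n y : 0 < y -> y <= node n -> (n <= nearest_node y)%N.
Proof.
move=> y_gt0 y_le; rewrite /nearest_node -ltnS.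
have n1_le : n.+1%:R <= y^-1 by rewrite -[n.+1%:R]invrK lef_pV2 ?posrE ?invr_gt0 ?ltr0n.
suff : (n.+1 <= Num.truncn (y^-1 + 2^-1))%N by case: (Num.truncn _).
rewrite truncn_ge_nat ?addr_ge0 ?invr_ge0 ?ltW //.
by apply: (le_lt_trans n1_le); rewrite ltrDl invr_gt0.
Qed.

Lemma nearest_node_locally_constant x0 : 0 < x0 -> cos (pi / x0) != 0 ->
  \forall y \near x0, nearest_node y = nearest_node x0.
Proof.
move=> x0_gt0 cos_neq0; set z := fun y : RR => y^-1 + 2^-1.
have zc : {for x0, continuous z}.
  apply: (@cvgD _ RR^o) (cvg_cst _); apply: cvgV => //; exact: lt0r_neq0.
have z_ge0 : 0 <= z x0 by rewrite addr_ge0 // invr_ge0 ltW.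
have /andP[m_le m_gt] := truncn_itv z_ge0; set m := Num.truncn _ in m_le m_gt.
have m_lt : m%:R < z x0.
  rewrite lt_neqAle m_le andbT; apply: contra cos_neq0 => /eqP zE.
  have -> : pi / x0 = pi * m%:R - pi / 2 by rewrite zE /z mulrDr addrK.
  by rewrite cosBpihalf sin_npi.
have gap_gt0 : 0 < Num.min (z x0 - m%:R) (m.+1%:R - z x0) by rewrite lt_min !subr_gt0 m_lt.
have [d d_gt0 zd] := continuous_atP zc gap_gt0.
apply/nbhs_ballP; exists d => // y /= /zd; rewrite lt_min => /andP[zy1 zy2].
rewrite /nearest_node -/(z y) -/(z x0) -/m (@truncn_def _ _ m) //.
have := ler_norm (z x0 - z y); have := ler_norm (z y - z x0); rewrite distrC.
by move=> ? ?; apply/andP; split; lra.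
Qed.

Definition cos_weight (x : RR) : RR := cos (pi / x) ^+ 2.
Definition sin_weight (x : RR) : RR := sin (pi / x) ^+ 2.

Lemma cos_weight_ge0 x : 0 <= cos_weight x. Proof. exact: sqr_ge0. Qed.
Lemma sin_weight_ge0 x : 0 <= sin_weight x. Proof. exact: sqr_ge0. Qed.
Lemma cos_weightD x : cos_weight x + sin_weight x = 1. Proof. exact: cos2Dsin2. Qed.

Lemma sin_weight_le1 x : sin_weight x <= 1.
Proof. by rewrite -(cos_weightD x) lerDr cos_weight_ge0. Qed.

Lemma cos_weight_node n : cos_weight (node n) = 1.
Proof. by rewrite /cos_weight /node invrK sqr_cos_npi. Qed.

Lemma sin_weight_node n : sin_weight (node n) = 0.
Proof. by rewrite /sin_weight /node invrK sin_npi expr0n. Qed.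

Lemma continuous_pi_div x0 : x0 != 0 -> {for x0, continuous (fun y : RR => pi / y)}.
Proof. by move=> x0_neq0; apply: (@cvgM RR) (cvg_cst _) (cvgV _ _). Qed.

Lemma cos_weight_continuous x0 : x0 != 0 -> {for x0, continuous cos_weight}.
Proof.
move=> x0_neq0; have cosc := continuous_comp (continuous_pi_div x0_neq0) (@continuous_cos _ _).
exact: (cvgM cosc cosc).
Qed.

Lemma sin_weight_continuous x0 : x0 != 0 -> {for x0, continuous sin_weight}.
Proof.
move=> x0_neq0; have sinc := continuous_comp (continuous_pi_div x0_neq0) (@continuous_sin _ _).
exact: (cvgM sinc sinc).
Qed.

Definition rho (x : RR) : RR := 1 - x * sin_weight x.

Lemma rho_le1 x : 0 <= x -> rho x <= 1.
Proof. by move=> x_ge0; rewrite lerBlDr lerDl mulr_ge0 ?sin_weight_ge0. Qed.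

Lemma rho_ge0 x : I01 x -> 0 <= rho x.
Proof.
move=> /andP[x_ge0 x_le1]; rewrite subr_ge0 -[1]mulr1.
by rewrite ler_pM ?sin_weight_ge0 ?sin_weight_le1.
Qed.

Lemma rho_lt1 x : 0 < x -> (forall n, x != node n) -> rho x < 1.
Proof.
move=> x_gt0 x_neq_node; rewrite ltrBlDr ltrDl mulr_gt0 // lt_def sin_weight_ge0 andbT.
have xV_gt0 : 0 < x^-1 by rewrite invr_gt0.
rewrite sqrf_eq0; apply/eqP => /(sin_pi_eq0 xV_gt0)[n xE].
by move: (x_neq_node n); rewrite /node -xE invrK eqxx.
Qed.

Lemma C01_rho : C01 rho.
Proof.
apply/within_continuousP => x0 Ix0 e e_gt0; have [->|x0_neq0] := eqVneq x0 0.
  exists e => // y /andP[y_ge0 _]; rewrite sub0r normrN => y_lt.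
  rewrite /rho mul0r subr0 opprB addrC subrK normrM (ger0_norm y_ge0).
  rewrite (ger0_norm (sin_weight_ge0 _)).
  by apply: le_lt_trans y_lt; rewrite ger0_norm // ler_piMr // sin_weight_le1.
have rhoc : {for x0, continuous rho}.
  apply: (@cvgB _ RR^o) (cvg_cst _) _.
  exact: (@cvgM RR) cvg_id (sin_weight_continuous x0_neq0).
by have [d d_gt0 rhod] := continuous_atP rhoc e_gt0; exists d => // y _; exact: rhod.
Qed.

(* [nearest_node] jumps exactly where [cos (pi / x)] vanishes, so [embed u] is
   continuous on (0, 1]. *)
Definition embed (u : nat -> RR) (x : RR) : RR :=
  if x == 0 then limn u
  else u (nearest_node x) * cos_weight x + limn u * ((1 - x) * sin_weight x).

Lemma embed_node u n : embed u (node n) = u n.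
Proof.
rewrite /embed gt_eqF ?node_gt0 // nearest_node_node cos_weight_node sin_weight_node.
by rewrite mulr1 !mulr0 addr0.
Qed.

Lemma embed_lin (a : RR) u v x : conv_seq u -> conv_seq v ->
  embed (fun n => a * u n + v n) x = a * embed u x + embed v x.
Proof. by move=> uc vc; rewrite /embed limn_lin //; case: (x == 0) => //; ring. Qed.

Lemma normr_embed_le u x : conv_seq u -> I01 x -> `|embed u x| <= rho x * c_norm u.
Proof.
move=> uc /andP[x_ge0 x_le1]; rewrite /embed /rho.
have [->|_] := eqVneq x 0; first by rewrite mul0r subr0 mul1r normr_limn_le.
set k := (1 - x) * sin_weight x.
have k_ge0 : 0 <= k by rewrite mulr_ge0 ?subr_ge0 ?sin_weight_ge0.
apply: le_trans (ler_normD _ _) _.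
rewrite (normrM (u _)) (normrM (limn u)) (ger0_norm (cos_weight_ge0 x)) (ger0_norm k_ge0).
have -> : 1 - x * sin_weight x = cos_weight x + k.
  by rewrite /k -{1}(cos_weightD x); ring.
rewrite mulrDl [cos_weight x * _]mulrC [k * _]mulrC.
by rewrite lerD // ler_wpM2r ?cos_weight_ge0 ?c_norm_ge ?normr_limn_le.
Qed.

Lemma normr_embed_le_c_norm u x : conv_seq u -> I01 x -> `|embed u x| <= c_norm u.
Proof.
move=> uc Ix; apply: le_trans (normr_embed_le uc Ix) _.
by rewrite ler_piMl ?c_norm_ge0 ?rho_ge0 ?rho_le1 //; case/andP: Ix.
Qed.

Lemma weighted_sample_near (u : nat -> RR) (B x0 : RR) :
  0 < x0 -> (forall n, `|u n| <= B) ->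
  \forall y \near x0, `|u (nearest_node x0) * cos_weight x0 - u (nearest_node y) * cos_weight y|
    <= B * `|cos_weight x0 - cos_weight y|.
Proof.
move=> x0_gt0 uB; have [cos_eq0|cos_neq0] := eqVneq (cos (pi / x0)) 0.
  near=> y; rewrite /cos_weight cos_eq0 expr0n /= mulr0 !sub0r !normrN normrM.
  by rewrite (ger0_norm (sqr_ge0 _)) ler_wpM2r ?sqr_ge0.
near=> y; rewrite (near (nearest_node_locally_constant x0_gt0 cos_neq0) y) //.
by rewrite -mulrBr normrM ler_wpM2r.
Unshelve. all: by end_near.
Qed.

Lemma weighted_sample_continuous u (x0 : RR) : conv_seq u -> 0 < x0 ->
  {for x0, continuous (fun y => u (nearest_node y) * cos_weight y)}.
Proof.
move=> uc x0_gt0; set B := c_norm u.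
have B1_gt0 : 0 < B + 1 by rewrite ltr_pwDr // c_norm_ge0.
have uB n : `|u n| <= B by exact: c_norm_ge.
apply/(@cvgrPdist_lt _ RR^o) => e e_gt0.
have /(@cvgrPdist_lt _ RR^o) /(_ (e / (B + 1)) (divr_gt0 e_gt0 B1_gt0)) cwc :=
  cos_weight_continuous (lt0r_neq0 x0_gt0).
near=> y.
have cwy : `|cos_weight x0 - cos_weight y| * (B + 1) < e by rewrite -ltr_pdivlMr //; near: y.
apply: (@le_lt_trans _ _ (B * `|cos_weight x0 - cos_weight y|)).
  by near: y; exact: weighted_sample_near.
by apply: le_lt_trans cwy; rewrite mulrC ler_wpM2l // lerDl.
Unshelve. all: by end_near.
Qed.

Lemma embed_continuous u (x0 : RR) : conv_seq u -> 0 < x0 -> {for x0, continuous (embed u)}.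
Proof.
move=> uc x0_gt0; have x0_neq0 := lt0r_neq0 x0_gt0.
set k := fun y : RR => (1 - y) * sin_weight y.
have kc : {for x0, continuous k}.
  apply: (@cvgM RR) (sin_weight_continuous x0_neq0).
  exact: (@cvgB _ RR^o) (cvg_cst _) cvg_id.
have embedE : \forall y \near x0, u (nearest_node y) * cos_weight y + limn u * k y = embed u y.
  near=> y; rewrite /embed ifF //; apply/negbTE; near: y.
  exact: (@cvgr_neq0 _ RR^o _ _ _ id x0 cvg_id x0_neq0).
apply: cvg_trans (near_eq_cvg embedE) _; rewrite /embed (negbTE x0_neq0).
apply: (@cvgD _ RR^o); first exact: weighted_sample_continuous.
exact: (@cvgM RR) (cvg_cst _) kc.
Unshelve. all: by end_near.
Qed.

Lemma embed_continuous_at0 u : conv_seq u -> forall e, 0 < e ->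
  exists2 d, 0 < d & forall y, I01 y -> `|0 - y| < d -> `|embed u 0 - embed u y| < e.
Proof.
move=> uc e e_gt0; set B := c_norm u; set L := limn u.
have B1_gt0 : 0 < B + 1 by rewrite ltr_pwDr // c_norm_ge0.
have e2_gt0 : 0 < e / 2 by rewrite divr_gt0.
have [N _ uN] := (@cvgrPdist_lt _ RR^o _ \oo _ u L).1 uc _ e2_gt0.
set d := e / 2 / (B + 1); have d_gt0 : 0 < d by rewrite divr_gt0.
have Bd : B * d <= e / 2.
  by rewrite -(divfK (lt0r_neq0 B1_gt0) (e / 2)) -/d mulrDr mulr1 mulrC lerDl ltW.
exists (Num.min (node N) d); first by rewrite lt_min node_gt0.
move=> y /andP[y_ge0 _]; rewrite sub0r normrN ger0_norm // lt_min => /andP[yN yd].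
rewrite /embed eqxx; have [//|y_neq0] := eqVneq y 0; first by rewrite subrr normr0.
have y_gt0 : 0 < y by rewrite lt_neqAle eq_sym y_neq0.
have -> : L - (u (nearest_node y) * cos_weight y + L * ((1 - y) * sin_weight y))
    = (L - u (nearest_node y)) * cos_weight y + L * (y * sin_weight y).
  by rewrite -{1}[L]mulr1 -{1}(cos_weightD y); ring.
apply: le_lt_trans (ler_normD _ _) _; rewrite (normrM (L - _)) (normrM L).
rewrite (ger0_norm (cos_weight_ge0 y)) (ger0_norm (mulr_ge0 y_ge0 (sin_weight_ge0 y))).
have tail : `|L - u (nearest_node y)| * cos_weight y < e / 2.
  apply: le_lt_trans (uN _ (nearest_node_ge y_gt0 (ltW yN))).
  by rewrite ler_piMr // -(cos_weightD y) lerDl sin_weight_ge0.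
have head : `|L| * (y * sin_weight y) <= e / 2.
  apply: le_trans Bd; apply: ler_pM; rewrite ?normr_ge0 ?normr_limn_le //.
    exact: mulr_ge0 y_ge0 (sin_weight_ge0 y).
  by apply: le_trans (ltW yd); rewrite ler_piMr // sin_weight_le1.
by rewrite [e]splitr ltr_leD.
Qed.

Lemma C01_embed u : conv_seq u -> C01 (embed u).
Proof.
move=> uc; apply/within_continuousP => x0 /andP[x0_ge0 _] e e_gt0.
have [->|x0_neq0] := eqVneq x0 0; first exact: embed_continuous_at0.
have x0_gt0 : 0 < x0 by rewrite lt_neqAle eq_sym x0_neq0.
have [d d_gt0 embedd] := continuous_atP (embed_continuous uc x0_gt0) e_gt0.
by exists d => // y _; exact: embedd.
Qed.

Lemma C_norm_embed u : conv_seq u -> C_norm (embed u) = c_norm u.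
Proof.
move=> uc; apply/eqP; rewrite eq_le; apply/andP; split.
  by apply: C_norm_le => x Ix; exact: normr_embed_le_c_norm.
apply: c_norm_le => n; rewrite -(embed_node u n).
by apply: C_norm_ge (I01_node n); exact: C01_embed.
Qed.

Definition sample (f : RR -> RR) (n : nat) : RR := f (node n).

Lemma sample_cvg f : C01 f -> sample f @ \oo --> f 0.
Proof.
move=> /within_continuousP fc; apply/(@cvgrPdist_lt _ RR^o) => e e_gt0.
have [d d_gt0 fd] := fc 0 I01_0 e e_gt0.
have node_lt : node (Num.truncn d^-1) < d.
  by rewrite -[ltRHS]invrK ltf_pV2 ?posrE ?ltr0n ?invr_gt0 // truncnS_gt.
exists (Num.truncn d^-1) => // n le_n; apply: fd (I01_node n) _.
by rewrite sub0r normrN gtr0_norm ?node_gt0 // (le_lt_trans (node_le le_n)).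
Qed.

Lemma conv_seq_sample f : C01 f -> conv_seq (sample f).
Proof. by move=> fc; apply/cvg_ex; exists (f 0); exact: sample_cvg. Qed.

Lemma limn_sample f : C01 f -> limn (sample f) = f 0.
Proof. by move=> fc; exact: (cvg_lim (@Rhausdorff RR) (sample_cvg fc)). Qed.

Lemma c_norm_sample_le f : C01 f -> c_norm (sample f) <= C_norm f.
Proof. by move=> fc; apply: c_norm_le => n; exact: C_norm_ge (I01_node n). Qed.

Lemma sample_embed u : sample (embed u) = u.
Proof. by apply: funext => n; exact: embed_node. Qed.

Lemma C_dual_comp_sample phi : c_dual phi -> C_dual (phi \o sample).
Proof.
move=> [phi_lin [M phiM]]; split => [a f g fc gc|].
  exact: phi_lin a _ _ (conv_seq_sample fc) (conv_seq_sample gc).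
exists `|M| => f fc; apply: le_trans (phiM _ (conv_seq_sample fc)) _.
apply: le_trans (ler_wpM2r (c_norm_ge0 (conv_seq_sample fc)) (ler_norm M)) _.
by rewrite ler_wpM2l // c_norm_sample_le.
Qed.

Lemma C_dual_norm_comp_sample phi : C_dual_norm (phi \o sample) = c_dual_norm phi.
Proof.
rewrite /C_dual_norm /c_dual_norm; congr sup; apply/seteqP; split => _ [w [wc w_le1] <-].
  exists (sample w) => //; split; first exact: conv_seq_sample.
  exact: le_trans (c_norm_sample_le wc) w_le1.
exists (embed w); last by rewrite /= sample_embed.
by split; [exact: C01_embed | rewrite C_norm_embed].
Qed.

Lemma rho_bounded_away_from1 g e : C01 g -> g 0 = 0 -> (forall n, g (node n) = 0) -> 0 < e ->
  exists2 t, 0 < t & forall x, I01 x -> e < `|g x| -> rho x + t <= 1.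
Proof.
move=> gc g0 g_node e_gt0; set F := fun x => (1 - rho x) + Num.max (e - `|g x|) 0.
have Fc : C01 F.
  apply: C01D; first by apply: (C01B (f := fun=> 1)); [exact: C01_cst | exact: C01_rho].
  apply: (@C01_comp (fun t => Num.max (e - `|t|) 0)) gc => t.
  have -> : (fun t : RR => Num.max (e - `|t|) 0) = (fun t => e - `|t|) \max (fun=> 0) by [].
  apply: continuous_max; last exact: cvg_cst.
  exact: (@cvgB _ RR^o) (cvg_cst _) (@norm_continuous _ RR^o t).
have F_gt0 x : I01 x -> 0 < F x.
  move=> Ix; have rho_le1' : rho x <= 1 by apply: rho_le1; case/andP: Ix.
  have [gx0|gx_neq0] := eqVneq (g x) 0.
    have : 0 < Num.max e 0 by rewrite lt_max e_gt0.
    by rewrite /F gx0 normr0 subr0; lra.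
  have x_gt0 : 0 < x.
    rewrite lt_neqAle; case/andP: Ix => -> _; rewrite andbT.
    by apply: contra gx_neq0 => /eqP <-; rewrite g0.
  have x_neq_node n : x != node n by apply: contra gx_neq0 => /eqP ->; rewrite g_node.
  have := rho_lt1 x_gt0 x_neq_node.
  have : 0 <= Num.max (e - `|g x|) 0 by rewrite le_max lexx orbT.
  by rewrite /F; lra.
have [c Ic Fmin] := compact_EVT_min (ex_intro _ 0 I01_0) I01_compact Fc.
rewrite inE in Ic; exists (F c); first exact: F_gt0.
move=> x Ix gx_gt; have := Fmin x (mem_set Ix).
have -> : F x = 1 - rho x by rewrite /F (max_idPr _) ?addr0 // subr_le0 ltW.
lra.
Qed.

Section NormPreservingExtension.
Variables (phi : (nat -> RR) -> RR) (psi : (RR -> RR) -> RR).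
Hypotheses (phic : c_dual phi) (psic : C_dual psi).
Hypothesis psi_embed : forall u, conv_seq u -> psi (embed u) = phi u.
Hypothesis psi_norm : C_dual_norm psi = c_dual_norm phi.

Lemma extension_eq0_under_rho g : C01 g -> (forall x, I01 x -> `|g x| + rho x <= 1) ->
  psi g = 0.
Proof.
move=> gc g_le1; suff : c_dual_norm phi <= c_dual_norm phi - `|psi g|.
  by rewrite lerBrDr gerDl normr_le0 => /eqP.
apply: c_dual_norm_le => // u uc u_le1.
set h := fun x => Num.sg (psi g) * g x + embed u x.
have hc : C01 h by apply: C01_lin gc (C01_embed uc).
have h_le1 : C_norm h <= 1.
  apply: C_norm_le => x Ix; apply: le_trans (ler_normD _ _) (le_trans _ (g_le1 x Ix)).
  rewrite normrM lerD //; first by rewrite ler_piMl // normr_sg lern1 leq_b1.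
  apply: le_trans (normr_embed_le uc Ix) _.
  by rewrite ler_piMr ?rho_ge0.
have := le_trans (ler_norm _) (C_dual_le_norm psic hc h_le1).
rewrite /h psic.1 //; last exact: C01_embed.
by rewrite psi_embed // -normrEsg psi_norm lerBrDl.
Qed.

Lemma extension_eq0_at_nodes g : C01 g -> g 0 = 0 -> (forall n, g (node n) = 0) -> psi g = 0.
Proof.
move=> gc g0 g_node; have [K K_ge0 psiK] := C_dual_bounded psic.
have [B gB] := C01_bounded gc.
have B_ge0 : 0 <= B by apply: le_trans (gB 0 I01_0); exact: normr_ge0.
apply: (eq0_of_normr_le_mul K_ge0) => e e_gt0.
set g2 := fun x => clamp e (g x); set g1 := fun x => g x - g2 x.
have g2c : C01 g2 by apply: C01_comp gc; exact: clamp_continuous.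
have g1c : C01 g1 by exact: C01B gc g2c.
have [t t_gt0 rho_t] := rho_bounded_away_from1 gc g0 g_node e_gt0.
have Be_gt0 : 0 < B + e by rewrite ltr_wpDl.
set s := t / (B + e); have s_gt0 : 0 < s by rewrite divr_gt0.
have psi_g1 : psi g1 = 0.
  suff : s * psi g1 = 0 by move/eqP; rewrite mulf_eq0 gt_eqF //= => /eqP.
  rewrite -C_dualZ //; apply: extension_eq0_under_rho => [|x Ix]; first exact: C01Z.
  have [g1x0|g1x_neq0] := eqVneq (g1 x) 0.
    by rewrite g1x0 mulr0 normr0 add0r rho_le1 //; case/andP: Ix.
  have gx_gt : e < `|g x|.
    by rewrite ltNge; apply: contra g1x_neq0 => /clamp_id gx; rewrite /g1 /g2 gx subrr.
  apply: le_trans (rho_t x Ix gx_gt); rewrite addrC lerD2l normrM gtr0_norm //.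
  rewrite -[leRHS](divfK (lt0r_neq0 Be_gt0)) -/s ler_pM2l //.
  apply: le_trans (ler_normB _ _) _.
  by rewrite lerD ?gB // normr_clamp_le // ltW.
have -> : g = fun x => 1 * g1 x + g2 x by apply: funext => x; rewrite mul1r subrK.
rewrite psic.1 // psi_g1 mulr0 add0r; apply: le_trans (psiK _ g2c) _.
by rewrite ler_wpM2l // C_norm_le // => x _; rewrite normr_clamp_le ?ltW.
Qed.

Lemma extension_eq_comp_sample f : C01 f -> psi f = phi (sample f).
Proof.
move=> fc; have sc := conv_seq_sample fc.
set g := fun x => -1 * embed (sample f) x + f x.
have gc : C01 g by apply: C01_lin fc; exact: C01_embed.
have g0 : g 0 = 0 by rewrite /g /embed eqxx limn_sample // mulN1r addNr.
have g_node n : g (node n) = 0 by rewrite /g embed_node mulN1r addNr.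
have := extension_eq0_at_nodes gc g0 g_node.
rewrite /g psic.1 //; last exact: C01_embed.
by rewrite psi_embed // mulN1r => /eqP; rewrite addrC subr_eq0 => /eqP.
Qed.

End NormPreservingExtension.

Theorem corollary6p17 : exists T : (nat -> RR) -> (RR -> RR), U_embedding_c_C T.
Proof.
exists embed; split.
  split; first exact: C01_embed.
  by split => [a u v uc vc x _|u uc]; [exact: embed_lin | exact: C_norm_embed].
move=> phi phic; exists (phi \o sample); split.
  split; first exact: C_dual_comp_sample.
  by split => [u uc|]; [rewrite /= sample_embed | exact: C_dual_norm_comp_sample].
by move=> psi psic psi_embed psi_norm f fc; exact: extension_eq_comp_sample.
Qed.
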